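(* Let $A,W\in \mathbb{C}^{n\times n}$ and $m\in \mathbb{N}$. Then $(WA)^m+I_n-WAWA^{\mathrm{cEP},W}$ is invertible.
   Context: $\mathbb{C}^{n\times n}$ carries the conjugate transpose involution. With $k=\max\{\mathrm{ind}(AW),\mathrm{ind}(WA)\}$ (Drazin indices), the weighted core-EP inverse $A^{\mathrm{cEP},W}$ of $A$ is the unique $X$ with $WAWX=(WA)^k[(WA)^k]^{\dagger}$ and $\mathcal{R}(X)\subseteq\mathcal{R}((AW)^k)$, where $\dagger$ is the Moore–Penrose inverse and $\mathcal{R}$ the range. *)

(* Complex numbers are R[i] = complex R for R : realType
   (mathcomp-real-closed's complex numbers over a real-closed field; for a
   realType this is the field of complex numbers). *)
From HB Require Import structures.
From mathcomp Require Import all_boot all_order all_algebra.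
From mathcomp Require Import complex.
From mathcomp Require Import reals.
Set Implicit Arguments. Unset Strict Implicit. Unset Printing Implicit Defensive.
Import Order.TTheory GRing.Theory Num.Theory.
Local Open Scope ring_scope.

Section Defs.
Variable R : realType.
Local Notation C := R[i].

Definition ctrmx (n : nat) (A : 'M[C]_n) : 'M[C]_n := (map_mx Num.conj A)^T.

Definition is_mpinv (n : nat) (A X : 'M[C]_n) : Prop :=
  [/\ A *m X *m A = A, X *m A *m X = X,
      ctrmx (A *m X) = A *m X & ctrmx (X *m A) = X *m A].

(* Drazin index: smallest k with rank (B^k) = rank (B^(k+1)); it is <= n *)
Definition ind (n : nat) (B : 'M[C]_n) : nat :=
  find (fun k => \rank (B ^+ k) == \rank (B ^+ k.+1)) (iota 0 n.+1).

(* range (column space) inclusion R(X) ⊆ R(Y) *)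
Definition range_sub (n : nat) (X Y : 'M[C]_n) : Prop := (X^T <= Y^T)%MS.

(* X is the weighted core-EP inverse A^{cEP,W}:
   W A W X = (WA)^k [(WA)^k]^dagger  and  R(X) ⊆ R((AW)^k),
   with k = max(ind(AW), ind(WA)). *)
Definition is_wcEP (n : nat) (A W X : 'M[C]_n) : Prop :=
  let k := maxn (ind (A *m W)) (ind (W *m A)) in
  (forall Y, is_mpinv ((W *m A) ^+ k) Y ->
     W *m A *m W *m X = (W *m A) ^+ k *m Y)
  /\ range_sub X ((A *m W) ^+ k).

End Defs.

From HB Require Import structures.
From mathcomp Require Import all_boot all_order all_algebra.
From mathcomp Require Import complex reals.
Set Implicit Arguments. Unset Strict Implicit. Unset Printing Implicit Defensive.
Import GRing.Theory Num.Theory.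
Local Open Scope ring_scope.

(* Write B = WA and k = max(ind(AW), ind(WA)) >= ind B.  The weighted core-EP
   inverse satisfies WAWX = B^k Y for a Moore-Penrose inverse Y of B^k, and
   only the inner-inverse equation B^k Y B^k = B^k of Y matters: it makes
   P = B^k Y an idempotent with range R(B^k), so Q = I - P annihilates B^k and
   Q B^j P = 0.  Hence Q (B^m + Q) = (I + Q B^m) Q, where Q B^m is nilpotent
   for m > 0 since (Q B^m)^t = Q B^(mt), and I + Q is invertible for m = 0.
   So (B^m + Q) Z = 0 forces Q Z = 0, i.e. Z = P Z lies in R(B^k); as
   R(B^k) = R(B^(k+m)), B^m is injective there and Z = 0. *)

Section UnitmxCriteria.
Variables (F : fieldType) (n : nat).

Lemma unitmx_inj (N : 'M[F]_n) : (forall Z : 'M_n, N *m Z = 0 -> Z = 0) -> N \in unitmx.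
Proof.
move=> injN; have /eqP := injN _ (mulmx_coker N).
rewrite -mxrank_eq0 mxrank_coker subn_eq0 => fullN.
by rewrite -row_free_unit /row_free eqn_leq rank_leq_row.
Qed.

Lemma unitmx_add1_nilpotent (N : 'M[F]_n) t : N ^+ t = 0 -> 1 + N \in unitmx.
Proof.
move=> Nt0; have := subrX1 (- N) t.
rewrite exprNn Nt0 mulr0 sub0r -opprD [N + 1]addrC mulNr => /oppr_inj/esym.
by rewrite -idmxE -mulmxE => /mulmx1_unit[-> _].
Qed.

Lemma unitmx_add1_idempotent (Q : 'M[F]_n) :
  Q * Q = Q -> 2%:R != 0 :> F -> 1 + Q \in unitmx.
Proof.
move=> QQ two_neq0; set h := 2%:R^-1 *: Q.
have hh : h + h = Q by rewrite /h -scalerDl -mulr2n -(mulr_natr 2^-1) mulVf ?scale1r.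
have Qh : Q * h = h by rewrite -mulmxE -scalemxAr mulmxE QQ.
suff: (1 + Q) *m (1 - h) = 1%:M by case/mulmx1_unit.
by rewrite mulmxE idmxE mulrDl mul1r mulrBr mulr1 Qh addrACA -opprD hh addrK.
Qed.
End UnitmxCriteria.

Section InnerInverseComplement.
Variables (F : fieldType) (n k : nat) (B Y : 'M[F]_n).
Hypothesis BYB : B ^+ k * Y * B ^+ k = B ^+ k.

Local Notation P := (B ^+ k * Y).
Local Notation Q := (1 - B ^+ k * Y).

Lemma compl_idem : Q * Q = Q.
Proof. by rewrite mulrBl mul1r mulrBr mulr1 mulrA BYB subrr subr0. Qed.

Lemma compl_mul_expr : Q * B ^+ k = 0.
Proof. by rewrite mulrBl mul1r BYB subrr. Qed.

Lemma compl_expr_mul_compl j : Q * B ^+ j * Q = Q * B ^+ j.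
Proof.
rewrite [in LHS]mulrBr mulr1 mulrA -(mulrA _ (B ^+ j)) -exprD addnC exprD.
by rewrite mulrA compl_mul_expr !mul0r subr0.
Qed.

Lemma compl_exprX m t : (Q * B ^+ m) ^+ t.+1 = Q * B ^+ (m * t.+1).
Proof.
elim: t => [|t IH]; first by rewrite expr1 muln1.
by rewrite exprS IH mulrA compl_expr_mul_compl -mulrA -exprD -mulnS.
Qed.

Lemma compl_expr_nilpotent m : (0 < m)%N -> (Q * B ^+ m) ^+ k.+1 = 0.
Proof.
move=> m_gt0; rewrite compl_exprX -(subnKC (_ : k <= m * k.+1)%N).
  by rewrite exprD mulrA compl_mul_expr mul0r.
by rewrite (leq_trans (leqnSn k)) // leq_pmull.
Qed.

Lemma unitmx_expr_add_inner_compl m :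
  (B ^+ k <= B ^+ (k + m))%MS -> 2%:R != 0 :> F -> B ^+ m + 1 - B ^+ k * Y \in unitmx.
Proof.
move=> /submxP[D BkD] two_neq0; rewrite -addrA.
have unitU : 1 + Q * B ^+ m \in unitmx.
  have [->|m_gt0] := posnP m; first by rewrite mulr1 unitmx_add1_idempotent ?compl_idem.
  exact: unitmx_add1_nilpotent (compl_expr_nilpotent m_gt0).
apply: unitmx_inj => Z; rewrite mulmxE => MZ0.
have QM : Q * (B ^+ m + Q) = (1 + Q * B ^+ m) * Q.
  by rewrite mulrDr [in RHS]mulrDl mul1r compl_expr_mul_compl compl_idem addrC.
have QZ0 : Q * Z = 0.
  rewrite -[Q * Z](mulKmx unitU) mulmxE [_ * (Q * Z)]mulrA -QM -mulrA MZ0.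
  by rewrite !mulr0.
have BmZ0 : B ^+ m * Z = 0 by rewrite -[LHS]addr0 -{1}QZ0 -mulrDl.
have ZP : Z = P * Z by rewrite -[LHS]mul1r -(subrK P 1) mulrDl QZ0 add0r.
by rewrite ZP BkD addnC exprD mulmxE -!mulrA (mulrA (B ^+ k)) -ZP BmZ0 mulr0.
Qed.
End InnerInverseComplement.

Section ExprRankStable.
Variables (F : fieldType) (n : nat) (B : 'M[F]_n).

Lemma exprS_submx k : (B ^+ k.+1 <= B ^+ k)%MS.
Proof. by rewrite exprS -mulmxE submxMl. Qed.

Lemma has_mxrank_expr_stable :
  has (fun k => \rank (B ^+ k) == \rank (B ^+ k.+1)) (iota 0 n.+1).
Proof.
apply/negPn/negP => /hasPn unstable.
suff: forall i, (i <= n.+1)%N -> (\rank (B ^+ i) + i <= n)%N.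
  by move/(_ n.+1 (leqnn _)); rewrite addnS ltnNge leq_addl.
elim=> [|i IH] le_in; first by rewrite expr0 addn0 mxrank1.
have rank_ltS : (\rank (B ^+ i.+1) < \rank (B ^+ i))%N.
  rewrite ltn_neqAle mxrankS ?exprS_submx // andbT eq_sym.
  by apply: unstable; rewrite mem_iota.
by rewrite addnS (leq_trans _ (IH (ltnW le_in))) // ltn_add2r.
Qed.

Lemma submx_expr_stable j i t :
  \rank (B ^+ j) = \rank (B ^+ j.+1) -> (j <= i)%N -> (B ^+ i <= B ^+ (i + t))%MS.
Proof.
move=> rank_eq le_ji.
have BjS : (B ^+ j <= B ^+ j.+1)%MS.
  by have := (mxrank_leqif_eq (exprS_submx j)).2; rewrite rank_eq eqxx => /esym/andP[].
have BiS l : (j <= l)%N -> (B ^+ l <= B ^+ l.+1)%MS.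
  by move=> le_jl; rewrite -(subnKC le_jl) -addSn !exprD -!mulmxE submxMr.
elim: t => [|t IH]; first by rewrite addn0.
by rewrite (submx_trans IH) // addnS BiS // (leq_trans le_ji) ?leq_addr.
Qed.
End ExprRankStable.

Section ConjugateTranspose.
Variable C : numClosedFieldType.

Definition ctmx m n (A : 'M[C]_(m, n)) : 'M[C]_(n, m) := (map_mx Num.conj A)^T.

Lemma ctmxM m n p (A : 'M[C]_(m, n)) (B : 'M_(n, p)) : ctmx (A *m B) = ctmx B *m ctmx A.
Proof. by rewrite /ctmx map_mxM trmx_mul. Qed.

Lemma ctmxK m n : cancel (@ctmx m n) (@ctmx n m).
Proof. by move=> A; apply/matrixP => i j; rewrite !mxE conjCK. Qed.

Lemma ctmx_inv n (A : 'M[C]_n) : ctmx (invmx A) = invmx (ctmx A).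
Proof. by rewrite /ctmx map_invmx trmx_inv. Qed.

Lemma mxrank_ctmx m n (A : 'M[C]_(m, n)) : \rank (ctmx A) = \rank A.
Proof. by rewrite mxrank_tr mxrank_map. Qed.

Lemma ctmx_mul_eq0 m n (A : 'M[C]_(m, n)) : ctmx A *m A = 0 -> A = 0.
Proof.
move=> AA0; apply/matrixP => i j; rewrite mxE.
have /matrixP/(_ j j) := AA0; rewrite !mxE => /eqP; rewrite psumr_eq0 => [|l _].
  by move=> /allP/(_ i (mem_index_enum i)); rewrite !mxE mulrC mul_conjC_eq0 => /eqP.
by rewrite !mxE mulrC mul_conjC_ge0.
Qed.

Lemma unitmx_ctmx_mul n r (A : 'M[C]_(n, r)) : row_full A -> ctmx A *m A \in unitmx.
Proof.
case/row_fullP => L LA; apply: unitmx_inj => Z AAZ0.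
have AZ0 : A *m Z = 0.
  by apply: ctmx_mul_eq0; rewrite ctmxM -mulmxA (mulmxA (ctmx A)) AAZ0 mulmx0.
by rewrite -[Z]mul1mx -LA -mulmxA AZ0 mulmx0.
Qed.
End ConjugateTranspose.

Section MoorePenrose.
Variable R : realType.
Local Notation C := R[i].

Lemma ctrmxE n (A : 'M[C]_n) : ctrmx A = ctmx A.
Proof. by []. Qed.

Lemma is_mpinv_factor n r (F : 'M[C]_(n, r)) (G : 'M_(r, n)) (S T : 'M_r) :
  S *m (ctmx F *m F) = 1%:M -> G *m ctmx G *m T = 1%:M -> ctmx S = S -> ctmx T = T ->
  is_mpinv (F *m G) (ctmx G *m T *m S *m ctmx F).
Proof.
move=> SFF GGT hermS hermT.
have FGY : F *m G *m (ctmx G *m T *m S *m ctmx F) = F *m S *m ctmx F.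
  by rewrite !mulmxA -(mulmxA F) -(mulmxA F) GGT mulmx1.
have YFG : ctmx G *m T *m S *m ctmx F *m (F *m G) = ctmx G *m T *m G.
  by rewrite !mulmxA -(mulmxA _ (ctmx F)) -(mulmxA _ S) SFF mulmx1.
split.
- by rewrite FGY -!mulmxA (mulmxA (ctmx F)) (mulmxA S) SFF mul1mx.
- by rewrite YFG -!mulmxA (mulmxA G) (mulmxA (G *m ctmx G)) GGT mul1mx !mulmxA.
- by rewrite FGY ctrmxE !ctmxM ctmxK hermS mulmxA.
- by rewrite YFG ctrmxE !ctmxM ctmxK hermT mulmxA.
Qed.

Lemma mpinv_full_rank_factor n r (F : 'M[C]_(n, r)) (G : 'M_(r, n)) :
  row_full F -> row_free G -> exists Y, is_mpinv (F *m G) Y.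
Proof.
move=> Ffull Gfree.
have unitFF := unitmx_ctmx_mul Ffull.
have unitGG : G *m ctmx G \in unitmx.
  by rewrite -{1}[G]ctmxK unitmx_ctmx_mul // /row_full mxrank_ctmx.
eexists; apply: (is_mpinv_factor (mulVmx unitFF) (mulmxV unitGG));
  by rewrite ctmx_inv ctmxM ctmxK.
Qed.

Lemma mpinv_exists n (A : 'M[C]_n) : exists Y, is_mpinv A Y.
Proof.
rewrite -(mulmx_base A).
by apply: mpinv_full_rank_factor; [apply: col_base_full | apply: row_base_free].
Qed.
End MoorePenrose.

Lemma mxrank_expr_ind (R : realType) n (B : 'M[R[i]]_n) :
  \rank (B ^+ ind B) = \rank (B ^+ (ind B).+1).
Proof.
have := nth_find 0 (has_mxrank_expr_stable B); rewrite nth_iota ?add0n => [/eqP //|].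
by have := has_mxrank_expr_stable B; rewrite has_find size_iota.
Qed.

Theorem corollary3p8 (R : realType) (n : nat) (A W X : 'M[R[i]]_n) (m : nat) :
  is_wcEP A W X ->
  (W *m A) ^+ m + 1%:M - W *m A *m W *m X \in unitmx.
Proof.
case=> WAWX _; set B := W *m A in WAWX *; set k := maxn _ _ in WAWX.
have [Y mpY] := mpinv_exists (B ^+ k).
rewrite (WAWX Y mpY) idmxE mulmxE; case: mpY => BYB _ _ _.
apply: unitmx_expr_add_inner_compl.
- by rewrite -!mulmxE.
- exact: submx_expr_stable (mxrank_expr_ind B) (leq_maxr _ _).
- by rewrite pnatr_eq0.
Qed.
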